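(* Let $d,k,j\ge1$. If there is no $\mathfrak W_k$-equivariant map $Y_{d,k}\to S(U_k^{\oplus j})$, then there is also no $\mathfrak W_k$-equivariant map $Y_{d-1,k}\to S\big(U_k^{\oplus(j-1)}\oplus\bigoplus_{\alpha\in B}V_\alpha\big)$.
   Context: $Y_{d,k}=(S^d)^k$ with $S^d\subset\mathbb{R}^{d+1}$, and $Y_{d-1,k}\subset Y_{d,k}$ is the subspace of tuples with each $x_i\perp e_{d+1}$ (product of equators). $\mathfrak W_k=(\mathbb{Z}/2)^k\rtimes\mathfrak S_k$ acts on $Y_{d,k}$ by $((\beta_1,\dots,\beta_k)\rtimes\tau)\cdot(v_1,\dots,v_k)=((-1)^{\beta_1}v_{\tau^{-1}(1)},\dots,(-1)^{\beta_k}v_{\tau^{-1}(k)})$. $U_k=\{(y_\gamma)_{\gamma\in(\mathbb{Z}/2)^k}:\sum_\gamma y_\gamma=0\}\subset\mathbb{R}^{(\mathbb{Z}/2)^k}$ with $\mathfrak W_k$ permuting coordinates via the action on indices $((\beta)\rtimes\tau)\cdot\gamma=(\beta_1+\gamma_{\tau^{-1}(1)},\dots,\beta_k+\gamma_{\tau^{-1}(k)})$ mod 2; $U_k^{\oplus j}$ carries the diagonal action, $S(\cdot)$ denotes the unit sphere. For $\alpha\in(\mathbb{Z}/2)^k\setminus\{0\}$, $V_\alpha\subset U_k$ is the line spanned by $((-1)^{\langle\alpha,\gamma\rangle})_{\gamma}$; as a $(\mathbb{Z}/2)^k$-representation $\beta$ acts on $V_\alpha$ by $(-1)^{\sum_i\alpha_i\beta_i}$,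 and $U_k=\bigoplus_{\alpha\ne0}V_\alpha$. $B\subset(\mathbb{Z}/2)^k$ is the set of $\alpha$ with at least two nonzero coordinates; $\bigoplus_{\alpha\in B}V_\alpha$ is a $\mathfrak W_k$-invariant subspace of $U_k$. *)

From mathcomp Require Import all_boot fingroup perm.
From Stdlib Require Import Reals.
Set Implicit Arguments. Unset Strict Implicit. Unset Printing Implicit Defensive.

Local Open Scope R_scope.

Definition rsum {T : finType} (F : T -> R) : R := \big[Rplus/0]_(t : T) F t.

(* (Z/2)^k, with Z/2 = bool and addition = xorb *)
Definition Z2k (k : nat) : finType := {ffun 'I_k -> bool}.

(* the group W_k = (Z/2)^k x| S_k, elements (beta, tau) *)
Definition Wk (k : nat) : Type := (Z2k k * {perm 'I_k})%type.

Definition sgnb (b : bool) : R := if b then -1 else 1.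

Definition PtY (d k : nat) : Type := 'I_k -> 'I_d.+1 -> R.
Definition PtU (j k : nat) : Type := 'I_j -> Z2k k -> R.

Definition actY (d k : nat) (g : Wk k) (v : PtY d k) : PtY d k :=
  fun i m => sgnb (g.1 i) * v ((g.2)^-1%g i) m.

Definition act_idx (k : nat) (g : Wk k) (gam : Z2k k) : Z2k k :=
  [ffun i => xorb (g.1 i) (gam ((g.2)^-1%g i))].

Definition winv (k : nat) (g : Wk k) : Wk k :=
  ([ffun i => g.1 (g.2 i)], (g.2)^-1%g).

(* permutation action on R^{(Z/2)^k}: (g.y)_{g.gamma} = y_gamma *)
Definition actU (k : nat) (g : Wk k) (y : Z2k k -> R) : Z2k k -> R :=
  fun gam => y (act_idx (winv g) gam).

Definition actUj (j k : nat) (g : Wk k) (y : PtU j k) : PtU j k :=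
  fun i => actU g (y i).

Definition inY (d k : nat) (x : PtY d k) : Prop :=
  forall i, rsum (fun m : 'I_d.+1 => (x i m)^2) = 1.

(* Y_{d-1,k} inside Y_{d,k}: each x_i orthogonal to e_{d+1} *)
Definition inYeq (d k : nat) (x : PtY d k) : Prop :=
  inY x /\ forall i, x i ord_max = 0.

Definition inU (k : nat) (y : Z2k k -> R) : Prop := rsum y = 0.

(* <alpha, gamma> mod 2 and the character vector spanning V_alpha *)
Definition pairing (k : nat) (a gam : Z2k k) : bool :=
  \big[xorb/false]_(i : 'I_k) (a i && gam i).
Definition chi (k : nat) (a : Z2k k) (gam : Z2k k) : R := sgnb (pairing a gam).

Definition inB (k : nat) (a : Z2k k) : bool := leq 2 #|[pred i | a i]|.

Definition inWB (k : nat) (y : Z2k k -> R) : Prop :=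
  exists c : Z2k k -> R,
    forall gam, y gam = rsum (fun a : Z2k k => if inB a then c a * chi a gam else 0).

Definition normsq (j k : nat) (y : PtU j k) : R :=
  rsum (fun i : 'I_j => rsum (fun gam : Z2k k => (y i gam)^2)).

Definition inSU (j k : nat) (y : PtU j k) : Prop :=
  (forall i, inU (y i)) /\ normsq y = 1.

(* S(U_k^{(+)(j-1)} (+) (+)_{alpha in B} V_alpha): the last (j-th) summand
   lies in (+)_{alpha in B} V_alpha, the others in U_k *)
Definition inSUB (j k : nat) (y : PtU j k) : Prop :=
  (forall i : 'I_j, if nat_of_ord i == j.-1 then inWB (y i) else inU (y i))
  /\ normsq y = 1.

Definition dist2 {A B : finType} (x y : A -> B -> R) : R :=
  rsum (fun a => rsum (fun b => (x a b - y a b)^2)).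

Definition cont_on {A B C D : finType} (P : (A -> B -> R) -> Prop)
    (f : (A -> B -> R) -> (C -> D -> R)) : Prop :=
  forall x, P x -> forall eps, 0 < eps -> exists del, 0 < del /\
    forall x', P x' -> dist2 x x' < del -> dist2 (f x) (f x') < eps.

Definition exists_equiv_map (d j k : nat) (dom : PtY d k -> Prop)
    (cod : PtU j k -> Prop) : Prop :=
  exists f : PtY d k -> PtU j k,
    (forall x, dom x -> cod (f x)) /\
    @cont_on 'I_k 'I_d.+1 'I_j (Z2k k) dom f /\
    (forall (g : Wk k) x, dom x -> f (actY g x) = actUj g (f x)).

From mathcomp Require Import all_boot fingroup perm.
From Stdlib Require Import Reals Lra FunctionalExtensionality Classical.
From HB Require Import structures.

(* Let f be an equivariant map from the product of equators Y_{d-1,k} to the sphere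
   of U_k^{j-1} (+) (+)_{alpha in B} V_alpha.  For x in Y_{d,k} with heights
   t_l = <x_l, e_{d+1}>, radially project every x_l to the equator (possible while
   the heights are small), apply f, damp the result by
   max(0, 1 - 2 sum_l t_l^2), and add sum_l t_l chi_{e_l}, which lies in the
   weight-one lines V_{e_l}, to the last summand.  The sum never vanishes: with
   all heights zero it is f itself, and otherwise its component along some
   V_{e_l} is nonzero, because V_{e_l} is orthogonal to every V_alpha with alpha
   in B.  Since U_k is the sum of all V_alpha, alpha <> 0, normalizing yields an
   equivariant map Y_{d,k} -> S(U_k^j). *)

Set Implicit Arguments. Unset Strict Implicit. Unset Printing Implicit Defensive.
Local Open Scope R_scope.

HB.instance Definition _ := Monoid.isComLaw.Build R 0 Rplus
  (fun a b c => esym (Rplus_assoc a b c)) Rplus_comm Rplus_0_l.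

Section RealSums.
Variable T : finType.
Implicit Types F G : T -> R.

Lemma eq_rsum F G : F =1 G -> rsum F = rsum G.
Proof. by move=> E; apply: eq_bigr => t _. Qed.

Lemma rsum0 : rsum (fun _ : T => 0) = 0.
Proof. exact: big1. Qed.

Lemma rsum_eq0 F : (forall t, F t = 0) -> rsum F = 0.
Proof. by move=> E; rewrite -rsum0; apply: eq_rsum. Qed.

Lemma rsumD F G : rsum (fun t => F t + G t) = rsum F + rsum G.
Proof. exact: big_split. Qed.

Lemma rsumZ c F : rsum (fun t => c * F t) = c * rsum F.
Proof. by rewrite /rsum; elim/big_rec2: _ => [|t x y _ ->]; ring. Qed.

Lemma rsum_ge0 F : (forall t, 0 <= F t) -> 0 <= rsum F.
Proof. by move=> F_ge0; apply: big_ind => // *; [lra | apply: Rplus_le_le_0_compat]. Qed.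

Lemma rsum_term_le F t0 : (forall t, 0 <= F t) -> F t0 <= rsum F.
Proof.
move=> F_ge0; rewrite /rsum (bigD1 t0) //=.
have : 0 <= \big[Rplus/0]_(t | t != t0) F t.
  by apply: big_ind => // *; [lra | apply: Rplus_le_le_0_compat].
lra.
Qed.

Lemma rsum_delta F t0 : rsum (fun t => if t == t0 then F t else 0) = F t0.
Proof.
by rewrite /rsum (bigD1 t0) //= eqxx big1 ?Rplus_0_r // => t /negbTE->.
Qed.

Lemma reindex_rsum F (h : T -> T) : injective h -> rsum F = rsum (fun t => F (h t)).
Proof. by move=> h_inj; rewrite /rsum (reindex_inj h_inj). Qed.

Lemma rsum_neq0 F : rsum F <> 0 -> exists t, F t <> 0.
Proof.
move=> F_neq0; apply: NNPP => no_t; apply: F_neq0; apply: rsum_eq0 => t.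
by apply: NNPP => Ft; apply: no_t; exists t.
Qed.

Lemma rsum1_gt0 (t0 : T) : 0 < rsum (fun _ : T => 1).
Proof. have := @rsum_term_le (fun _ => 1) t0 (fun _ => Rle_0_1); lra. Qed.

End RealSums.

Lemma exchange_rsum (T U : finType) (F : T -> U -> R) :
  rsum (fun t => rsum (F t)) = rsum (fun u => rsum (fun t => F t u)).
Proof. exact: exchange_big. Qed.

Lemma rsum2_term_le (T U : finType) (F : T -> U -> R) t u :
  (forall t u, 0 <= F t u) -> F t u <= rsum (fun t => rsum (F t)).
Proof.
move=> F_ge0; apply: Rle_trans (rsum_term_le u (F_ge0 t)) _.
exact: (rsum_term_le t (fun t => rsum_ge0 (F_ge0 t))).
Qed.

Lemma dist2_coord (A B : finType) (x y : A -> B -> R) a b :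
  (x a b - y a b) ^ 2 <= dist2 x y.
Proof. by apply: rsum2_term_le => *; apply: pow2_ge_0. Qed.

Lemma dist2_xx (A B : finType) (x : A -> B -> R) : dist2 x x = 0.
Proof. by apply: rsum_eq0 => a; apply: rsum_eq0 => b; ring. Qed.

Lemma Rabs_lt_of_sq u e : 0 < e -> u ^ 2 < e ^ 2 -> Rabs u < e.
Proof.
move=> e_gt0 u_lt; rewrite -[e]Rabs_pos_eq; last lra.
by apply: Rsqr_lt_abs_0; rewrite /Rsqr; lra.
Qed.

Lemma continuity_pt_id y : continuity_pt id y.
Proof. exact: derivable_continuous_pt (derivable_pt_id y). Qed.

Lemma continuity_pt_invsqrt y : 0 < y -> continuity_pt (fun z => / sqrt z) y.
Proof.
move=> y_gt0; apply: continuity_pt_inv; first exact: continuity_pt_sqrt (Rlt_le _ _ y_gt0).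
exact: Rgt_not_eq (sqrt_lt_R0 _ y_gt0).
Qed.

Section Continuity.
Variables A B : finType.
Notation Pt := (A -> B -> R).
Variable P : Pt -> Prop.
Implicit Types (F G : Pt -> R) (x : Pt).

Definition rcont_at F x0 : Prop :=
  forall eps, 0 < eps -> exists del, 0 < del /\
    forall x, P x -> dist2 x0 x < del -> Rabs (F x - F x0) < eps.

Lemma eq_rcont_at F G x0 : (forall x, F x = G x) -> rcont_at F x0 -> rcont_at G x0.
Proof.
move=> E F_cont eps eps_gt0; have [del [del_gt0 H]] := F_cont eps eps_gt0.
by exists del; split => // x Px; rewrite -!E; apply: H.
Qed.

Lemma rcont_at_const c x0 : rcont_at (fun _ => c) x0.
Proof. by move=> eps eps_gt0; exists 1; split=> [|x _ _]; rewrite ?Rminus_diag ?Rabs_R0; lra. Qed.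

Lemma rcont_at_coord a b x0 : rcont_at (fun x => x a b) x0.
Proof.
move=> eps eps_gt0; exists (eps ^ 2); split; first exact: pow_lt.
move=> x _ near; rewrite -Rabs_Ropp Ropp_minus_distr; apply: Rabs_lt_of_sq => //.
by have := dist2_coord x0 x a b; lra.
Qed.

Lemma rcont_atD F G x0 :
  rcont_at F x0 -> rcont_at G x0 -> rcont_at (fun x => F x + G x) x0.
Proof.
move=> F_cont G_cont eps eps_gt0.
have [d1 [d1_gt0 H1]] := F_cont (eps / 2) ltac:(lra).
have [d2 [d2_gt0 H2]] := G_cont (eps / 2) ltac:(lra).
exists (Rmin d1 d2); split; first exact: Rmin_pos.
move=> x Px near; have := Rmin_l d1 d2; have := Rmin_r d1 d2 => ??.
have := H1 x Px ltac:(lra); have := H2 x Px ltac:(lra) => ??.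
have -> : F x + G x - (F x0 + G x0) = (F x - F x0) + (G x - G x0) by ring.
by apply: Rle_lt_trans (Rabs_triang _ _) _; lra.
Qed.

Lemma rcont_at_comp (phi : R -> R) F x0 :
  rcont_at F x0 -> continuity_pt phi (F x0) -> rcont_at (fun x => phi (F x)) x0.
Proof.
move=> F_cont phi_cont eps eps_gt0.
have [alp [alp_gt0 Hphi]] := phi_cont eps eps_gt0.
have [del [del_gt0 HF]] := F_cont alp alp_gt0.
exists del; split => // x Px near.
have [E|Fx_neq] := Req_dec (F x) (F x0); first by rewrite E Rminus_diag Rabs_R0.
by apply: (Hphi (F x)); split; [split; [done | auto] | exact: HF].
Qed.

Lemma rcont_atZ c F x0 : rcont_at F x0 -> rcont_at (fun x => c * F x) x0.
Proof.
move=> F_cont; apply: (rcont_at_comp (phi := fun y => c * y)) F_cont _.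
exact: continuity_pt_scal (continuity_pt_id _).
Qed.

Lemma rcont_at_sq F x0 : rcont_at F x0 -> rcont_at (fun x => F x ^ 2) x0.
Proof.
move=> F_cont; apply: (rcont_at_comp (phi := fun y => y ^ 2)) F_cont _.
exact: derivable_continuous_pt (derivable_pt_pow 2 _).
Qed.

(* Polarization: [F G = ((F + G)^2 - (F - G)^2) / 4]. *)
Lemma rcont_atM F G x0 :
  rcont_at F x0 -> rcont_at G x0 -> rcont_at (fun x => F x * G x) x0.
Proof.
move=> F_cont G_cont.
have sum_sq := rcont_at_sq (rcont_atD F_cont G_cont).
have diff_sq := rcont_at_sq (rcont_atD F_cont (rcont_atZ (-1) G_cont)).
apply: eq_rcont_at (rcont_atZ (/4) (rcont_atD sum_sq (rcont_atZ (-1) diff_sq))).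
by move=> x; field.
Qed.

Lemma rcont_at_rsum (I : finType) (F : I -> Pt -> R) x0 :
  (forall i, rcont_at (F i) x0) -> rcont_at (fun x => rsum (fun i => F i x)) x0.
Proof.
move=> F_cont; rewrite /rsum; elim: (index_enum I) => [|i s IH].
  by apply: eq_rcont_at (rcont_at_const 0 x0) => x; rewrite big_nil.
by apply: eq_rcont_at (rcont_atD (F_cont i) IH) => x; rewrite big_cons.
Qed.

Lemma rcont_at_gt0 F x0 : rcont_at F x0 -> 0 < F x0 ->
  exists r, 0 < r /\ forall x, P x -> dist2 x0 x < r -> 0 < F x.
Proof.
move=> F_cont F_gt0; have [r [r_gt0 H]] := F_cont (F x0) F_gt0.
by exists r; split => // x Px near; have /Rabs_def2 := H x Px near; lra.
Qed.

Lemma rcont_atM_bounded F G x0 :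
  rcont_at F x0 -> F x0 = 0 -> (forall x, P x -> F x <> 0 -> Rabs (G x) <= 1) ->
  rcont_at (fun x => F x * G x) x0.
Proof.
move=> F_cont F0 G_bounded eps eps_gt0.
have [del [del_gt0 H]] := F_cont eps eps_gt0; exists del; split => // x Px near.
have := H x Px near; rewrite F0 Rmult_0_l !Rminus_0_r Rabs_mult.
have [->|Fx_neq0] := Req_dec (F x) 0; first by rewrite Rabs_R0 Rmult_0_l.
have := G_bounded x Px Fx_neq0; have := Rabs_pos (F x); have := Rabs_pos (G x); nra.
Qed.

Variables C D : finType.
Implicit Type f : Pt -> (C -> D -> R).

Definition cont_at f x0 : Prop :=
  forall eps, 0 < eps -> exists del, 0 < del /\
    forall x, P x -> dist2 x0 x < del -> dist2 (f x0) (f x) < eps.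

Lemma cont_at_coord f x0 c d : cont_at f x0 -> rcont_at (fun x => f x c d) x0.
Proof.
move=> f_cont eps eps_gt0; have [del [del_gt0 H]] := f_cont (eps ^ 2) (pow_lt _ _ eps_gt0).
exists del; split => // x Px near; rewrite -Rabs_Ropp Ropp_minus_distr.
apply: Rabs_lt_of_sq => //; have := dist2_coord (f x0) (f x) c d; have := H x Px near; lra.
Qed.

Lemma cont_at_coords f x0 : (forall c d, rcont_at (fun x => f x c d) x0) -> cont_at f x0.
Proof.
move=> f_cont eps eps_gt0.
have dist_cont : rcont_at (fun x => dist2 (f x0) (f x)) x0.
  apply: rcont_at_rsum => c; apply: rcont_at_rsum => d; apply: rcont_at_sq.
  apply: eq_rcont_at (rcont_atD (rcont_at_const (f x0 c d) x0) (rcont_atZ (-1) (f_cont c d))).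
  by move=> x; ring.
have [del [del_gt0 H]] := dist_cont eps eps_gt0; exists del; split => // x Px near.
by have := H x Px near; rewrite dist2_xx Rminus_0_r => /Rabs_def2; lra.
Qed.

End Continuity.

Lemma cont_at_comp (A B C D E F : finType) (P : (A -> B -> R) -> Prop)
    (Q : (C -> D -> R) -> Prop) (g : (A -> B -> R) -> (C -> D -> R))
    (f : (C -> D -> R) -> (E -> F -> R)) x0 :
  cont_at P g x0 -> cont_at Q f (g x0) ->
  (exists r, 0 < r /\ forall x, P x -> dist2 x0 x < r -> Q (g x)) ->
  cont_at P (fun x => f (g x)) x0.
Proof.
move=> g_cont f_cont [r [r_gt0 gQ]] eps eps_gt0.
have [alp [alp_gt0 Hf]] := f_cont eps eps_gt0.
have [del [del_gt0 Hg]] := g_cont alp alp_gt0.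
exists (Rmin del r); split; first exact: Rmin_pos.
move=> x Px near; have := Rmin_l del r; have := Rmin_r del r => ??.
by apply: Hf; [apply: gQ => //; lra | apply: Hg => //; lra].
Qed.

Lemma sgnbD x y : sgnb (x (+) y) = sgnb x * sgnb y.
Proof. by case: x; case: y; rewrite /sgnb /=; ring. Qed.

Lemma sgnb_sq b : sgnb b ^ 2 = 1.
Proof. by case: b; rewrite /sgnb; ring. Qed.

Section Characters.
Variable k : nat.
Implicit Types a b g : Z2k k.

Definition addz a b : Z2k k := [ffun i => a i (+) b i].
Definition zeroz : Z2k k := [ffun _ => false].
Definition ev (i : 'I_k) : Z2k k := [ffun m => m == i].

Lemma addz_inj a : injective (addz a).
Proof. by move=> b c /ffunP E; apply/ffunP => i; have := E i; rewrite !ffunE => /addbI. Qed.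

Lemma addz_eq0 a b : (addz a b == zeroz) = (a == b).
Proof.
apply/eqP/eqP => [/ffunP E | ->]; last by apply/ffunP => i; rewrite !ffunE addbb.
by apply/ffunP => i; have := E i; rewrite !ffunE; case: (a i); case: (b i).
Qed.

Lemma ev_inj : injective ev.
Proof. by move=> i m /ffunP /(_ i); rewrite !ffunE eqxx => /esym /eqP ->. Qed.

Lemma pairingE a g : pairing a g = \big[addb/false]_i (a i && g i).
Proof. by rewrite /pairing; elim/big_rec2: _ => // i x y _ ->; case: (_ && _); case: y. Qed.

Lemma pairingC a g : pairing a g = pairing g a.
Proof. by rewrite !pairingE; apply: eq_bigr => i _; rewrite andbC. Qed.

Lemma pairingDl a b g : pairing (addz a b) g = pairing a g (+) pairing b g.
Proof.
rewrite !pairingE -big_split /=; apply: eq_bigr => i _.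
by rewrite ffunE; case: (a i); case: (b i); case: (g i).
Qed.

Lemma chiDl a b g : chi (addz a b) g = chi a g * chi b g.
Proof. by rewrite /chi pairingDl sgnbD. Qed.

Lemma chiDr a b g : chi a (addz b g) = chi a b * chi a g.
Proof. by rewrite /chi pairingC pairingDl sgnbD !(pairingC _ a). Qed.

Lemma chi0 g : chi zeroz g = 1.
Proof. by rewrite /chi pairingE big1 // => i _; rewrite ffunE. Qed.

Lemma chi_ev i g : chi (ev i) g = sgnb (g i).
Proof.
rewrite /chi pairingE (bigD1 i) //= ffunE eqxx big1 ?addbF // => m /negbTE m_neq.
by rewrite ffunE m_neq.
Qed.

Lemma chi_sq a g : chi a g * chi a g = 1.
Proof. by rewrite -chiDl (eqP (_ : addz a a == zeroz)) ?chi0 // addz_eq0. Qed.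

(* Translating by a coordinate vector on which [a] is odd flips the sign of [chi a]. *)
Lemma chi_sum0 a : a != zeroz -> rsum (chi a) = 0.
Proof.
move=> a_neq0.
have [m am] : exists m, a m.
  apply/existsP; apply: contraR a_neq0; rewrite negb_exists => /forallP a0.
  by apply/eqP/ffunP => i; rewrite ffunE; apply/negbTE/a0.
have : rsum (chi a) = -1 * rsum (chi a).
  rewrite {1}(reindex_rsum _ (@addz_inj (ev m))) -rsumZ; apply: eq_rsum => g.
  by rewrite chiDr [chi a (ev m)]/chi pairingC -/(chi (ev m) a) chi_ev am.
lra.
Qed.

Lemma chi_orth a b : a != b -> rsum (fun g => chi a g * chi b g) = 0.
Proof.
rewrite -addz_eq0 => ab_neq0; rewrite -(chi_sum0 ab_neq0).
by apply: eq_rsum => g; rewrite chiDl.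
Qed.

Lemma inB_zero : ~~ inB zeroz.
Proof. by rewrite /inB (@eq_card _ _ pred0) ?card0 // => m; rewrite !inE ffunE. Qed.

Lemma inB_ev i : ~~ inB (ev i).
Proof. by rewrite /inB (@eq_card _ _ (pred1 i)) ?card1 // => m; rewrite !inE ffunE. Qed.

Lemma inWB_orth (w : Z2k k -> R) b :
  inWB w -> ~~ inB b -> rsum (fun g => w g * chi b g) = 0.
Proof.
move=> [c w_eq] b_notB; under eq_rsum => g do rewrite w_eq Rmult_comm -rsumZ.
rewrite exchange_rsum; apply: rsum_eq0 => a.
case a_B: (inB a); last by apply: rsum_eq0 => g; ring.
have ab_neq : a != b by apply: contraNneq b_notB => <-; rewrite a_B.
by under eq_rsum => g do rewrite Rmult_comm Rmult_assoc; rewrite rsumZ chi_orth ?Rmult_0_r.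
Qed.

Lemma inWB_inU (w : Z2k k -> R) : inWB w -> inU w.
Proof.
move=> /inWB_orth /(_ inB_zero); rewrite /inU => <-.
by apply: eq_rsum => g; rewrite chi0 Rmult_1_r.
Qed.

Definition chi_comb (t : 'I_k -> R) g : R := rsum (fun l => t l * chi (ev l) g).

Lemma chi_comb_inU t : inU (chi_comb t).
Proof.
rewrite /inU exchange_rsum; apply: rsum_eq0 => l.
by rewrite rsumZ chi_sum0 ?Rmult_0_r //; apply/eqP => /ffunP /(_ l); rewrite !ffunE eqxx.
Qed.

Lemma chi_comb_coef t i :
  rsum (fun g => chi_comb t g * chi (ev i) g) = t i * rsum (fun _ : Z2k k => 1).
Proof.
under eq_rsum => g do rewrite Rmult_comm -rsumZ.
rewrite exchange_rsum -(rsum_delta (fun l => t l * rsum (fun _ => 1)) i).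
apply: eq_rsum => l /=; under eq_rsum => g do rewrite Rmult_comm Rmult_assoc; rewrite rsumZ.
have [->|l_neq] := eqVneq l i.
  by congr (_ * _); apply: eq_rsum => g; rewrite chi_sq.
by rewrite chi_orth ?Rmult_0_r //; apply: contra_neq l_neq; exact: ev_inj.
Qed.

End Characters.

Definition pos_part (y : R) : R := (y + Rabs y) / 2.

Lemma pos_part_ge0 y : 0 <= pos_part y.
Proof. by rewrite /pos_part; have := Rle_abs (- y); rewrite Rabs_Ropp; lra. Qed.

Lemma pos_part_neq0 y : pos_part y <> 0 -> 0 < y.
Proof. by rewrite /pos_part; have [|/Rabs_left1 ->] := Rlt_le_dec 0 y; lra. Qed.

Lemma pos_part_id y : 0 <= y -> pos_part y = y.
Proof. by move=> y_ge0; rewrite /pos_part Rabs_pos_eq //; field. Qed.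

Lemma continuity_pos_part y : continuity_pt pos_part y.
Proof.
apply: continuity_pt_mult; last exact: continuity_pt_const.
exact: continuity_pt_plus (continuity_pt_id y) (Rcontinuity_abs y).
Qed.

Lemma act_idx_inj k (h : Wk k) : injective (act_idx h).
Proof.
move=> a b /ffunP E; apply/ffunP => m; have := E (h.2 m); rewrite !ffunE permK.
by case: (h.1 _); case: (a m); case: (b m).
Qed.

Lemma normsq_actUj j k (h : Wk k) (y : PtU j k) : normsq (actUj h y) = normsq y.
Proof.
apply: eq_rsum => i.
by rewrite [RHS](reindex_rsum _ (@act_idx_inj _ (winv h))).
Qed.

Section Retraction.
Variables d k : nat.
Implicit Types x : PtY d k.

Definition height x l : R := x l ord_max.
Definition height2 x : R := rsum (fun l => height x l ^ 2).
Definition damp x : R := pos_part (1 - 2 * height2 x).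
Definition equator2 x i : R :=
  rsum (fun m : 'I_d.+1 => if m == ord_max then 0 else x i m ^ 2).
Definition to_equator x : PtY d k :=
  fun i m => if m == ord_max then 0 else x i m / sqrt (equator2 x i).

Lemma damp_ge0 x : 0 <= damp x.
Proof. exact: pos_part_ge0. Qed.

Lemma damp_heights0 x : (forall l, height x l = 0) -> damp x = 1.
Proof.
move=> h0; have h2_0 : height2 x = 0 by apply: rsum_eq0 => l; rewrite h0; ring.
by rewrite /damp h2_0 pos_part_id; lra.
Qed.

Lemma equator2_inY x i : inY x -> equator2 x i = 1 - height x i ^ 2.
Proof.
move=> x_inY; suff : equator2 x i + height x i ^ 2 = 1 by lra.
rewrite -(x_inY i) -(rsum_delta (fun m => x i m ^ 2) ord_max) /equator2 -rsumD.
by apply: eq_rsum => m; case: (m == ord_max); ring.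
Qed.

Lemma equator2_gt0 x i : inY x -> damp x <> 0 -> 0 < equator2 x i.
Proof.
move=> x_inY /pos_part_neq0 damp_pos; rewrite equator2_inY //.
have : height x i ^ 2 <= height2 x by apply: rsum_term_le => l; apply: pow2_ge_0.
lra.
Qed.

Lemma to_equator_inYeq x : inY x -> damp x <> 0 -> inYeq (to_equator x).
Proof.
move=> x_inY damp_neq0; split => i; last by rewrite /to_equator eqxx.
have e_gt0 := equator2_gt0 i x_inY damp_neq0.
rewrite -(Rinv_r (equator2 x i)); last lra.
rewrite Rmult_comm -rsumZ; apply: eq_rsum => m; rewrite /to_equator.
case: (m == ord_max); first ring.
by rewrite /Rdiv Rpow_mult_distr pow_inv -(Rsqr_pow2 (sqrt _)) Rsqr_sqrt; [ring | lra].
Qed.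

Lemma height_actY (h : Wk k) x l :
  height (actY h x) l = sgnb (h.1 l) * height x ((h.2)^-1%g l).
Proof. by []. Qed.

Lemma damp_actY (h : Wk k) x : damp (actY h x) = damp x.
Proof.
rewrite /damp /height2 [in RHS](reindex_rsum _ (@perm_inj _ ((h.2)^-1%g))).
congr (pos_part (_ - _ * _)); apply: eq_rsum => l.
by rewrite height_actY Rpow_mult_distr sgnb_sq Rmult_1_l.
Qed.

Lemma to_equator_actY (h : Wk k) x : to_equator (actY h x) = actY h (to_equator x).
Proof.
have equator2_act i : equator2 (actY h x) i = equator2 x ((h.2)^-1%g i).
  apply: eq_rsum => m; case: (m == ord_max) => //.
  by rewrite /actY Rpow_mult_distr sgnb_sq Rmult_1_l.
apply: functional_extensionality => i; apply: functional_extensionality => m.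
by rewrite /to_equator equator2_act /actY; case: (m == ord_max); rewrite /Rdiv; ring.
Qed.

Lemma chi_comb_actY (h : Wk k) x g :
  chi_comb (height (actY h x)) g = chi_comb (height x) (act_idx (winv h) g).
Proof.
rewrite /chi_comb (reindex_rsum _ (@perm_inj _ h.2)); apply: eq_rsum => l.
rewrite height_actY permK !chi_ev !ffunE /= invgK.
by case: (h.1 _); case: (g _); rewrite /sgnb /=; ring.
Qed.

Variable P : PtY d k -> Prop.

Lemma rcont_at_damp x0 : rcont_at P damp x0.
Proof.
have height2_cont : rcont_at P height2 x0.
  by apply: rcont_at_rsum => l; apply: rcont_at_sq; apply: rcont_at_coord.
apply: rcont_at_comp (continuity_pos_part _).
apply: eq_rcont_at (rcont_atD (rcont_at_const _ 1 x0) (rcont_atZ (-2) height2_cont)).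
by move=> x; ring.
Qed.

Lemma cont_at_to_equator x0 : (forall i, 0 < equator2 x0 i) -> cont_at P to_equator x0.
Proof.
move=> e_gt0; apply: cont_at_coords => i m; rewrite /to_equator.
case: (m == ord_max); first exact: rcont_at_const.
apply: rcont_atM (rcont_at_coord _ _ _ _) _.
apply: rcont_at_comp (continuity_pt_invsqrt (e_gt0 i)).
apply: rcont_at_rsum => m'; case: (m' == ord_max); first exact: rcont_at_const.
by apply: rcont_at_sq; apply: rcont_at_coord.
Qed.

End Retraction.

Lemma normsq_coord j k (y : PtU j k) i g : y i g ^ 2 <= normsq y.
Proof. by apply: rsum2_term_le => *; apply: pow2_ge_0. Qed.

Lemma normsq_gt0 j k (y : PtU j k) i g : y i g <> 0 -> 0 < normsq y.
Proof.
move=> y_neq0; apply: Rlt_le_trans (normsq_coord y i g).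
by rewrite -Rsqr_pow2; exact: Rsqr_pos_lt.
Qed.

Lemma normsq1_coord j k (y : PtU j k) i g : normsq y = 1 -> Rabs (y i g) <= 1.
Proof.
move=> y_unit; have := normsq_coord y i g; rewrite y_unit -pow2_abs.
by have := Rabs_pos (y i g); nra.
Qed.

Lemma normsq_scale j k (y : PtU j k) c :
  normsq (fun i g => y i g * c) = c ^ 2 * normsq y.
Proof.
rewrite /normsq -rsumZ; apply: eq_rsum => i; rewrite -rsumZ.
by apply: eq_rsum => g; ring.
Qed.

Section Extension.
Variables d k j : nat.
Hypothesis j_gt0 : (0 < j)%nat.
Variable f : PtY d k -> PtU j k.
Hypothesis f_maps : forall x, inYeq x -> inSUB (f x).
Hypothesis f_cont : cont_on (@inYeq d k) f.
Hypothesis f_equiv : forall (h : Wk k) x, inYeq x -> f (actY h x) = actUj h (f x).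
Implicit Types x : PtY d k.

Definition last_summand : 'I_j := Ordinal (etrans (ltn_predL j) j_gt0).

Definition phi x : PtU j k := fun i g =>
  damp x * f (to_equator x) i g
  + (if nat_of_ord i == j.-1 then chi_comb (height x) g else 0).

Definition extension x : PtU j k := fun i g => phi x i g / sqrt (normsq (phi x)).

Lemma damp_f_sum0 x i : inY x -> damp x * rsum (f (to_equator x) i) = 0.
Proof.
move=> x_inY; have [->|damp_neq0] := Req_dec (damp x) 0; first ring.
have [f_sub _] := f_maps (to_equator_inYeq x_inY damp_neq0).
by have := f_sub i; case: (_ == _) => [/inWB_inU|] ->; ring.
Qed.

Lemma phi_inU x i : inY x -> inU (phi x i).
Proof.
move=> x_inY; rewrite /inU /phi rsumD rsumZ damp_f_sum0 // Rplus_0_l.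
by case: (_ == _); [apply: chi_comb_inU | apply: rsum0].
Qed.

Lemma phi_last_coef x l : inY x ->
  rsum (fun g => phi x last_summand g * chi (ev l) g)
  = height x l * rsum (fun _ : Z2k k => 1).
Proof.
move=> x_inY; rewrite -chi_comb_coef /phi /= eqxx.
under eq_rsum => g do rewrite Rmult_plus_distr_r Rmult_assoc; rewrite rsumD rsumZ.
suff -> : damp x * rsum (fun g => f (to_equator x) last_summand g * chi (ev l) g) = 0
  by rewrite Rplus_0_l.
have [->|damp_neq0] := Req_dec (damp x) 0; first ring.
have [f_sub _] := f_maps (to_equator_inYeq x_inY damp_neq0).
by have := f_sub last_summand; rewrite /= eqxx => /inWB_orth ->; [ring | apply: inB_ev].
Qed.

Lemma phi_normsq_gt0 x : inY x -> 0 < normsq (phi x).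
Proof.
move=> x_inY; have [[l hl_neq0]|heights0] := classic (exists l, height x l <> 0).
  have : rsum (fun g => phi x last_summand g * chi (ev l) g) <> 0.
    rewrite phi_last_coef //; apply: Rmult_integral_contrapositive_currified => //.
    by have := rsum1_gt0 (zeroz k); lra.
  move=> /rsum_neq0 [g]; have [->|phi_neq0 _] := Req_dec (phi x last_summand g) 0.
    by rewrite Rmult_0_l.
  exact: normsq_gt0 phi_neq0.
have {}heights0 l : height x l = 0 by apply: NNPP => hl; apply: heights0; exists l.
have damp1 := damp_heights0 heights0.
have phi_eq : phi x = f (to_equator x).
  apply: functional_extensionality => i; apply: functional_extensionality => g.
  rewrite /phi damp1 (_ : chi_comb _ g = 0); first by case: (_ == _); ring.
  by apply: rsum_eq0 => l; rewrite heights0; ring.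
have damp_neq0 : damp x <> 0 by rewrite damp1; lra.
by rewrite phi_eq; have [_ ->] := f_maps (to_equator_inYeq x_inY damp_neq0); lra.
Qed.

Lemma extension_inSU x : inY x -> inSU (extension x).
Proof.
move=> x_inY; have phi_gt0 := phi_normsq_gt0 x_inY; split.
  move=> i; rewrite /inU /extension.
  under eq_rsum => g do rewrite /Rdiv Rmult_comm.
  by rewrite rsumZ phi_inU // Rmult_0_r.
rewrite /extension normsq_scale pow_inv -(Rsqr_pow2 (sqrt _)) Rsqr_sqrt; last lra.
by field; lra.
Qed.

Lemma phi_actY (h : Wk k) x : inY x -> phi (actY h x) = actUj h (phi x).
Proof.
move=> x_inY; apply: functional_extensionality => i; apply: functional_extensionality => g.
rewrite /phi /actUj /actU damp_actY chi_comb_actY; congr (_ + _).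
have [->|damp_neq0] := Req_dec (damp x) 0; first ring.
by rewrite to_equator_actY f_equiv //; apply: to_equator_inYeq.
Qed.

Lemma extension_actY (h : Wk k) x : inY x -> extension (actY h x) = actUj h (extension x).
Proof. by move=> x_inY; rewrite /extension phi_actY // normsq_actUj. Qed.

Lemma rcont_at_damp_f x0 i g : inY x0 ->
  rcont_at (@inY d k) (fun x => damp x * f (to_equator x) i g) x0.
Proof.
move=> x0_inY; have [damp0|damp_neq0] := Req_dec (damp x0) 0.
  apply: rcont_atM_bounded (rcont_at_damp _ _) damp0 _ => x x_inY damp_neq0.
  by have [_ f_unit] := f_maps (to_equator_inYeq x_inY damp_neq0); apply: normsq1_coord.
apply: rcont_atM (rcont_at_damp _ _) _.
suff f_eq_cont : cont_at (@inY d k) (fun x => f (to_equator x)) x0.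
  exact: cont_at_coord f_eq_cont.
have f_cont_at : cont_at (@inYeq d k) f (to_equator x0).
  exact: f_cont (to_equator_inYeq x0_inY damp_neq0).
apply: (cont_at_comp _ f_cont_at).
  by apply: cont_at_to_equator => l; apply: equator2_gt0.
have damp_gt0 : 0 < damp x0 by have := damp_ge0 x0; lra.
have [r [r_gt0 near_damp]] := rcont_at_gt0 (rcont_at_damp (@inY d k) x0) damp_gt0.
exists r; split => // x x_inY near.
by apply: to_equator_inYeq => //; have := near_damp x x_inY near; lra.
Qed.

Lemma cont_at_extension x0 : inY x0 -> cont_at (@inY d k) extension x0.
Proof.
move=> x0_inY.
have phi_cont i g : rcont_at (@inY d k) (fun x => phi x i g) x0.
  apply: rcont_atD (rcont_at_damp_f i g x0_inY) _.
  case: (_ == _); last exact: rcont_at_const.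
  apply: rcont_at_rsum => l.
  exact: rcont_atM (rcont_at_coord _ _ _ _) (rcont_at_const _ _ _).
have normsq_cont : rcont_at (@inY d k) (fun x => normsq (phi x)) x0.
  by apply: rcont_at_rsum => i; apply: rcont_at_rsum => g; apply: rcont_at_sq.
apply: cont_at_coords => i g; apply: rcont_atM (phi_cont i g) _.
exact: rcont_at_comp normsq_cont (continuity_pt_invsqrt (phi_normsq_gt0 x0_inY)).
Qed.

End Extension.

(* With [R_scope] open, [(1 <= d)%N] below would not parse as [leq]. *)
Local Close Scope R_scope.

Theorem proposition3p3 (d k j : nat) :
  (1 <= d)%N -> (1 <= k)%N -> (1 <= j)%N ->
  ~ @exists_equiv_map d j k (@inY d k) (@inSU j k) ->
  ~ @exists_equiv_map d j k (@inYeq d k) (@inSUB j k).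
Proof.
move=> _ _ j_gt0 no_map [f [f_maps [f_cont f_equiv]]]; apply: no_map.
exists (extension f); split; first exact: extension_inSU.
split; last exact: extension_actY.
by move=> x; apply: cont_at_extension.
Qed.
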